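(* Consider the four-thread trace $T$ (positions 1–14): $acq(y)$ (thread 1), $w(z_1)$ (thread 1), $r(z_1)$ (thread 2), $w(x)$ (thread 2), $w(z_2)$ (thread 2), $r(z_2)$ (thread 1), $rel(y)$ (thread 1), $acq(y)$ (thread 3), $w(z_3)$ (thread 3), $r(z_3)$ (thread 4), $w(x)$ (thread 4), $w(z_4)$ (thread 4), $r(z_4)$ (thread 3), $rel(y)$ (thread 3). Let $e$ be the write on $x$ at position 4 and $f$ the write on $x$ at position 11. Then $(e,f)$ is a potential Lockset-PWR data race pair of $T$ (with $LS(e)=LS(f)=\emptyset$), but $(e,f)\notin\mathcal{P}(T)$. In particular, not every potential Lockset-PWR data race pair is predictable.
   Context: Traces. A trace $T$ is a finite sequence of pairwise distinct events. Each event $e$ belongs to a thread $\mathrm{tid}(e)$ and is one of: a read $r(x)$ or write $w(x)$ of a shared variable $x$, or an acquire $acq(y)$ or release $rel(y)$ of a lock $y$. $\mathrm{pos}_T(e)$ is the index of $e$ in $T$. The projection of $T$ onto thread $i$ is the subsequence of events of thread $i$. A critical section $CS$ on lock $y$ consists of a matching acquire/release pair $acq(CS)$, $rel(CS)$ in thread $i$ together with the events of thread $i$ between them; we write $e \in CS$. The lockset $LS(e)$ of an event $e$ is the set of locks $y$ such that $e$ belongs to some critical section on $y$. Two events are conflicting if they are reads/writes on the same variable, at least one is a write, and they belong to different threads. For a read $e$ on $x$, a write $f$ on $x$ is the last write of $e$ w.r.t. $T$ if $f$ precedes $e$ in $T$ and no other write on $x$ lies strictly between them. Correct reordering. $T'$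 is a correctly reordered prefix of $T$ if $T'$ is a sequence of some of the events of $T$ such that: (i) for every thread $i$, the projection of $T'$ onto $i$ is a prefix of the projection of $T$ onto $i$; (ii) for every read $e$ in $T'$ whose last write w.r.t. $T$ is $f$, $f$ is in $T'$ and is also the last write of $e$ w.r.t. $T'$; (iii) for any two acquires $e_1,e_2$ on the same lock with $e_1$ before $e_2$ in $T'$, the matching release of $e_1$ is in $T'$ and lies strictly between $e_1$ and $e_2$. Predictable races. $(e,f)$ is a predictable data race pair of $T$ if $e,f$ are conflicting events of $T$ and there is a correctly reordered prefix $T'$ of $T$ in which $e$ appears immediately before $f$; if both are writes we additionally require $\mathrm{pos}_T(e)<\mathrm{pos}_T(f)$. $\mathcal{P}(T)$ denotes the set of all such pairs. PWR relation. $<^{PWR}$ is the smallest strict partial order on the events of $T$ such that: (PO) if $\mathrm{tid}(e)=\mathrm{tid}(f)$ and $\mathrm{pos}_T(e)<\mathrm{pos}_T(f)$ then $e<^{PWR}f$; (WRD) if the write $w$ is the last write w.r.t. $T$ of the read $r$ then $w<^{PWR}r$; (ROD) if $CS, CS'$ are distinct critical sections on the same lock, $e\in CS$, $f\in CS'$ and $e<^{PWR}f$, then $rel(CS)<^{PWR}f$. Potential pairs. $(e,f)$ is a potential Lockset-PWR data race pair if $e,f$ are conflicting, $LS(e)\cap LS(f)=\emptyset$, neither $e<^{PWR}f$ nor $f<^{PWR}e$, and either both are writes or $e$ is a read and $f$ a write. *)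

From HB Require Import structures.
From mathcomp Require Import all_boot.
Set Implicit Arguments. Unset Strict Implicit. Unset Printing Implicit Defensive.

Inductive op := Read of nat | Write of nat | Acq of nat | Rel of nat.

Definition op_code (o : op) : nat * nat :=
  match o with Read x => (0, x) | Write x => (1, x) | Acq y => (2, y) | Rel y => (3, y) end.
Definition op_decode (p : nat * nat) : op :=
  match p with (0, x) => Read x | (1, x) => Write x | (2, y) => Acq y | (_, y) => Rel y end.
Lemma op_codeK : cancel op_code op_decode. Proof. by case. Qed.
HB.instance Definition _ := Equality.copy op (can_type op_codeK).

Record event := Event { eid : nat; tid : nat; eop : op }.
Definition event_code (e : event) := (eid e, tid e, eop e).
Definition event_decode (p : nat * nat * op) := Event p.1.1 p.1.2 p.2.
Lemma event_codeK : cancel event_code event_decode. Proof. by case. Qed.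
HB.instance Definition _ := Equality.copy event (can_type event_codeK).

(* A trace is a sequence of pairwise distinct events; pos_T(e) = index e T. *)
Definition trace := seq event.
Definition pos (T : trace) (e : event) : nat := index e T.

Definition is_read (e : event) : bool := if eop e is Read _ then true else false.
Definition is_write (e : event) : bool := if eop e is Write _ then true else false.
Definition accesses (x : nat) (e : event) : bool :=
  (eop e == Read x) || (eop e == Write x).

Definition proj (T : trace) (i : nat) : trace := [seq e <- T | tid e == i].

Definition matching (T : trace) (y : nat) (a r : event) : Prop :=
  [/\ a \in T /\ r \in T, eop a = Acq y /\ eop r = Rel y, tid r = tid a,
      pos T a < pos T r &
      forall g, g \in T -> tid g = tid a -> eop g = Rel y ->
        ~ (pos T a < pos T g < pos T r)].

Definition in_CS (T : trace) (y : nat) (a r e : event) : Prop :=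
  [/\ matching T y a r, e \in T, tid e = tid a & pos T a <= pos T e <= pos T r].

Definition LS (T : trace) (e : event) (y : nat) : Prop :=
  exists a r, in_CS T y a r e.

Definition conflicting (T : trace) (e f : event) : Prop :=
  [/\ e \in T, f \in T,
      exists x, accesses x e && accesses x f,
      is_write e || is_write f & tid e <> tid f].

Definition last_write (T : trace) (r w : event) : Prop :=
  exists x, [/\ r \in T /\ w \in T, eop r = Read x /\ eop w = Write x,
    pos T w < pos T r &
    forall g, g \in T -> g <> w -> eop g = Write x -> ~ (pos T w < pos T g < pos T r)].

Definition correct_reordering (T T' : trace) : Prop :=
  [/\ uniq T', {subset T' <= T},
      (forall i, prefix (proj T' i) (proj T i)),
      (forall r w, r \in T' -> last_write T r w -> w \in T' /\ last_write T' r w) &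
      (forall y e1 e2, e1 \in T' -> e2 \in T' -> eop e1 = Acq y -> eop e2 = Acq y ->
         pos T' e1 < pos T' e2 ->
         exists r, [/\ matching T y e1 r, r \in T' & pos T' e1 < pos T' r < pos T' e2])].

Definition predictable (T : trace) (e f : event) : Prop :=
  [/\ conflicting T e f,
      exists T' s1 s2, correct_reordering T T' /\ T' = s1 ++ e :: f :: s2 &
      is_write e -> is_write f -> pos T e < pos T f].

Inductive pwr (T : trace) : event -> event -> Prop :=
| pwr_po e f : e \in T -> f \in T -> tid e = tid f -> pos T e < pos T f -> pwr T e f
| pwr_wrd w r : last_write T r w -> pwr T w r
| pwr_rod y a r a' r' e f :
    a <> a' -> in_CS T y a r e -> in_CS T y a' r' f -> pwr T e f -> pwr T r f
| pwr_trans e g f : pwr T e g -> pwr T g f -> pwr T e f.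

Definition potential (T : trace) (e f : event) : Prop :=
  [/\ conflicting T e f,
      (forall y, ~ (LS T e y /\ LS T f y)),
      ~ pwr T e f, ~ pwr T f e &
      (is_write e && is_write f) || (is_read e && is_write f)].

(* The concrete trace of the theorem: lock y = 0, variable x = 0,
   z_i = i; event ids are the positions 1..14. *)
Definition y0 := 0.
Definition x0 := 0.
Definition Tex : trace :=
  [:: Event 1 1 (Acq y0);
      Event 2 1 (Write 1);
      Event 3 2 (Read 1);
      Event 4 2 (Write x0);
      Event 5 2 (Write 2);
      Event 6 1 (Read 2);
      Event 7 1 (Rel y0);
      Event 8 3 (Acq y0);
      Event 9 3 (Write 3);
      Event 10 4 (Read 3);
      Event 11 4 (Write x0);
      Event 12 4 (Write 4);
      Event 13 3 (Read 4);
      Event 14 3 (Rel y0)].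
Definition e_ex := Event 4 2 (Write x0).
Definition f_ex := Event 11 4 (Write x0).

(* The trace Tex consists of two critical sections on the same lock y:
   the one of thread 1 (events 1-7) encloses, through write-read
   communications on z1 and z2, the write e of thread 2; the one of
   thread 3 (events 8-14) likewise encloses the write f of thread 4.

   - No PWR ordering: each generator of PWR (program order, last-write
     edges, release ordering) relates events whose threads lie in the same
     block of any partition respected by the last-write edges
     ([pwr_preserves]); in Tex the blocks {1,2} and {3,4} are such, and e, f
     lie in different blocks.
   - Empty locksets: only threads 1 and 3 acquire locks ([LS_acquire]).
   - Not predictable: b is "forced after" a when every correct reordering
     containing b contains a earlier ([must_precede]); this relation is
     transitive and contains program order and last-write edges.  Since e is
     forced between acq(y) and rel(y) of thread 1, and f between those of
     thread 3, and a correct reordering serializes the two critical sections,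
     a correct reordering placing e before f places rel(y) of thread 1
     strictly between them ([separated_by_lock]), so e and f are never
     adjacent ([index_adjacent]). *)
From mathcomp Require Import all_boot.

Set Implicit Arguments.
Unset Strict Implicit.
Unset Printing Implicit Defensive.

Lemma index_lt_filter (T : eqType) (P : pred T) (s : seq T) a b :
  P a -> P b -> a \in s -> b \in s ->
  (index a (filter P s) < index b (filter P s)) = (index a s < index b s).
Proof.
move=> Pa Pb; elim: s => [//|x s IH] /=; rewrite !in_cons.
case: (eqVneq x a) => [xa|xa].
  by rewrite -xa in Pa *; rewrite Pa /= eqxx; case: (x == b).
case: (eqVneq x b) => [xb|xb].
  by rewrite -xb in Pb *; rewrite Pb /= eqxx (negbTE xa).
move=> /= ain bin; rewrite ltnS -IH //.
by case: (P x); rewrite //= (negbTE xa) (negbTE xb).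
Qed.

Lemma index_adjacent (T : eqType) (s1 s2 : seq T) e f :
  uniq (s1 ++ e :: f :: s2) ->
  index f (s1 ++ e :: f :: s2) = (index e (s1 ++ e :: f :: s2)).+1.
Proof.
rewrite -cat1s catA cat_uniq /= => /and3P[uniq_s1e /norP[f_s1e _] _].
move: uniq_s1e; rewrite cat_uniq /= orbF andbT => /andP[_ e_s1].
by rewrite index_pivot // size_cat addn1 -catA cat1s index_pivot.
Qed.

Lemma LS_acquire T e y :
  LS T e y -> exists2 a, a \in T & eop a = Acq y /\ tid a = tid e.
Proof. by case=> a [r [[[ain _] [acq _] _ _ _] _ tide _]]; exists a. Qed.

(* PWR respects any partition of the threads respected by the last-write
   edges: program order and release ordering never leave a thread. *)
Lemma pwr_preserves T (blk : nat -> bool) e f :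
  (forall r w, last_write T r w -> blk (tid w) = blk (tid r)) ->
  pwr T e f -> blk (tid e) = blk (tid f).
Proof.
move=> lw_blk; elim=> {e f}.
- by move=> e f _ _ ->.
- move=> w r; exact: lw_blk.
- by move=> y a r a' r' e f _ [[_ _ -> _ _] _ <- _] _ _ ->.
- by move=> e g f _ -> _ ->.
Qed.

Section MustPrecede.

Variable T : trace.

Definition must_precede (a b : event) : Prop :=
  forall T', correct_reordering T T' -> b \in T' ->
    a \in T' /\ pos T' a < pos T' b.

Lemma must_precede_trans a b c :
  must_precede a b -> must_precede b c -> must_precede a c.
Proof.
move=> ab bc T' cr cin; have [bin bc'] := bc T' cr cin.
by have [ain ab'] := ab T' cr bin; split=> //; apply: ltn_trans bc'.
Qed.

(* Program order is forced, since thread projections may only be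
   truncated. *)
Lemma must_precede_po a b :
  [&& a \in T, b \in T, tid a == tid b & pos T a < pos T b] ->
  must_precede a b.
Proof.
case/and4P=> ain bin /eqP tab ab T' [_ _ pre _ _] bin'.
pose same_thread := fun g : event => tid g == tid b.
have a_thread : same_thread a by rewrite /same_thread tab.
have b_thread : same_thread b by rewrite /same_thread.
have /prefixP[rest projT] := pre (tid b).
have b_proj : b \in proj T' (tid b) by rewrite mem_filter eqxx.
move: ab; rewrite /pos -(index_lt_filter a_thread b_thread) // -/(proj T (tid b)) projT.
rewrite !index_cat b_proj.
have [a_proj|_] := boolP (a \in proj T' (tid b)); last first.
  by rewrite ltnNge (leq_trans (ltnW _) (leq_addr _ _)) // index_mem.
have ain' : a \in T' by move: a_proj; rewrite mem_filter => /andP[].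
by rewrite index_lt_filter.
Qed.

Lemma must_precede_wrd r w : last_write T r w -> must_precede w r.
Proof.
move=> lw T' [_ _ _ lwT' _] rin.
by have [win [x [_ _ wr _]]] := lwT' r w rin lw.
Qed.

(* Two distinct critical sections on y with determined releases r1, r2:
   if e is forced inside the first and f inside the second, then in a
   correct reordering where e precedes f, the release r1 lies between them,
   because the section of a2 cannot open before r1 (and cannot precede the
   first one, as f would then precede e). *)
Lemma separated_by_lock y a1 r1 a2 r2 e f T' :
  a1 != a2 -> eop a1 = Acq y -> eop a2 = Acq y ->
  (forall r, matching T y a1 r -> r = r1) ->
  (forall r, matching T y a2 r -> r = r2) ->
  must_precede a1 e -> must_precede e r1 ->
  must_precede a2 f -> must_precede f r2 ->
  correct_reordering T T' -> e \in T' -> f \in T' -> pos T' e < pos T' f ->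
  pos T' e < pos T' r1 < pos T' f.
Proof.
move=> a12 acq1 acq2 rel1 rel2 a1e er1 a2f fr2 cr ein fin ef.
have [a1in a1e'] := a1e T' cr ein.
have [a2in a2f'] := a2f T' cr fin.
have lock := let: And5 _ _ _ _ l := cr in l y.
case: (ltngtP (pos T' a1) (pos T' a2)) => [a1a2|a2a1|same].
- have [r [/rel1 -> r1in /andP[_ r1a2]]] := lock a1 a2 a1in a2in acq1 acq2 a1a2.
  have [_ er1'] := er1 T' cr r1in.
  by rewrite er1' (ltn_trans r1a2 a2f').
- have [r [/rel2 -> r2in /andP[_ r2a1]]] := lock a2 a1 a2in a1in acq2 acq1 a2a1.
  have [_ fr2'] := fr2 T' cr r2in.
  have := ltn_trans ef (ltn_trans fr2' (ltn_trans r2a1 a1e')).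
  by rewrite ltnn.
- by move: a12; rewrite (index_inj a1 a1in a2in same) eqxx.
Qed.

End MustPrecede.

Lemma last_writeP (T : trace) (r w : event) (x : nat) :
  [&& r \in T, w \in T, eop r == Read x, eop w == Write x & pos T w < pos T r] ->
  all (fun g => (eop g == Write x) ==> (g == w) || ~~ (pos T w < pos T g < pos T r))
      T ->
  last_write T r w.
Proof.
case/and5P=> rin win /eqP rx /eqP wx wr between; exists x; split=> // g gin gw gx.
by move: (allP between g gin); rewrite gx eqxx (introF eqP gw) => /negP.
Qed.

Notation acq1 := (Event 1 1 (Acq y0)).
Notation w_z1 := (Event 2 1 (Write 1)).
Notation r_z1 := (Event 3 2 (Read 1)).
Notation w_z2 := (Event 5 2 (Write 2)).
Notation r_z2 := (Event 6 1 (Read 2)).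
Notation rel1 := (Event 7 1 (Rel y0)).
Notation acq3 := (Event 8 3 (Acq y0)).
Notation w_z3 := (Event 9 3 (Write 3)).
Notation r_z3 := (Event 10 4 (Read 3)).
Notation w_z4 := (Event 12 4 (Write 4)).
Notation r_z4 := (Event 13 3 (Read 4)).
Notation rel3 := (Event 14 3 (Rel y0)).

Definition reads_var_written (r w : event) : bool :=
  if (eop r, eop w) is (Read x, Write x') then x == x' else false.

Lemma Tex_last_write_halves r w :
  last_write Tex r w -> (tid w <= 2) = (tid r <= 2).
Proof.
case=> x [[rin win] [rx wx] _ _].
have halves : all (fun r => all (fun w =>
    reads_var_written r w ==> ((tid w <= 2) == (tid r <= 2))) Tex) Tex.
  by vm_compute.
have := implyP (allP (allP halves r rin) w win).
by rewrite /reads_var_written rx wx eqxx => /(_ isT) /eqP.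
Qed.

Lemma Tex_lockset_free e y : tid e \notin [:: 1; 3] -> ~ LS Tex e y.
Proof.
move=> te /LS_acquire[a ain [acq ta]].
have acquirers : all (fun a => if eop a is Acq _ then tid a \in [:: 1; 3]
                               else true) Tex by vm_compute.
by move: (allP acquirers a ain); rewrite acq ta (negbTE te).
Qed.

Lemma Tex_matching_release y a r :
  matching Tex y a r -> tid a = 1 /\ r = rel1 \/ tid a = 3 /\ r = rel3.
Proof.
case=> [[_ rin] [_ rel] <- _ _].
have releases : all (fun r => if eop r is Rel _ then (r == rel1) || (r == rel3)
                              else true) Tex by vm_compute.
by move: (allP releases r rin); rewrite rel => /orP[] /eqP->; [left|right].
Qed.

Lemma Tex_last_writes :
  [/\ last_write Tex r_z1 w_z1, last_write Tex r_z2 w_z2,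
      last_write Tex r_z3 w_z3 & last_write Tex r_z4 w_z4].
Proof.
by split; [apply: (last_writeP (x := 1)) | apply: (last_writeP (x := 2))
          | apply: (last_writeP (x := 3)) | apply: (last_writeP (x := 4))].
Qed.

Lemma Tex_e_inside : must_precede Tex acq1 e_ex /\ must_precede Tex e_ex rel1.
Proof.
have [lw1 lw2 _ _] := Tex_last_writes.
split.
- apply: (must_precede_trans (b := w_z1)); first exact: must_precede_po.
  apply: (must_precede_trans (must_precede_wrd lw1)).
  exact: must_precede_po.
- apply: (must_precede_trans (b := w_z2)); first exact: must_precede_po.
  apply: (must_precede_trans (must_precede_wrd lw2)).
  exact: must_precede_po.
Qed.

Lemma Tex_f_inside : must_precede Tex acq3 f_ex /\ must_precede Tex f_ex rel3.
Proof.
have [_ _ lw3 lw4] := Tex_last_writes.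
split.
- apply: (must_precede_trans (b := w_z3)); first exact: must_precede_po.
  apply: (must_precede_trans (must_precede_wrd lw3)).
  exact: must_precede_po.
- apply: (must_precede_trans (b := w_z4)); first exact: must_precede_po.
  apply: (must_precede_trans (must_precede_wrd lw4)).
  exact: must_precede_po.
Qed.

(* In a correct reordering of the form s1 ++ e :: f :: s2, rel1 would have to
   lie strictly between the adjacent events e and f. *)
Lemma Tex_not_predictable : ~ predictable Tex e_ex f_ex.
Proof.
case=> _ [T' [s1 [s2 [cr T'_def]]]] _.
have uniq_T' : uniq T' by case: cr.
have ein : e_ex \in T' by rewrite T'_def mem_cat inE eqxx orbT.
have fin : f_ex \in T' by rewrite T'_def mem_cat !inE eqxx !orbT.
have f_next : pos T' f_ex = (pos T' e_ex).+1.
  by rewrite /pos T'_def index_adjacent // -T'_def.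
have [acq_e e_rel] := Tex_e_inside.
have [acq_f f_rel] := Tex_f_inside.
have release1 y r : matching Tex y acq1 r -> r = rel1.
  by case/Tex_matching_release=> [[_ ->]|[]].
have release3 y r : matching Tex y acq3 r -> r = rel3.
  by case/Tex_matching_release=> [[]|[_ ->]].
have e_before_f : pos T' e_ex < pos T' f_ex by rewrite f_next.
have /andP[] := separated_by_lock (a1 := acq1) (a2 := acq3) isT erefl erefl
  (release1 y0) (release3 y0) acq_e e_rel acq_f f_rel cr ein fin e_before_f.
by rewrite f_next ltnS => /leq_trans le /le; rewrite ltnn.
Qed.

Lemma Tex_potential : potential Tex e_ex f_ex.
Proof.
have halves := pwr_preserves (blk := fun i => i <= 2) Tex_last_write_halves.
split.
- by split=> //; exists x0.
- by move=> y [ls_e _]; apply: Tex_lockset_free ls_e.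
- by move/halves.
- by move/halves.
- by [].
Qed.

Theorem mainTheorem4 :
  [/\ uniq Tex /\ e_ex \in Tex /\ f_ex \in Tex,
      potential Tex e_ex f_ex,
      (forall y, ~ LS Tex e_ex y) /\ (forall y, ~ LS Tex f_ex y),
      ~ predictable Tex e_ex f_ex &
      exists T (e f : event), [/\ uniq T, potential T e f & ~ predictable T e f]].
Proof.
split=> //.
- exact: Tex_potential.
- by split=> y; apply: Tex_lockset_free.
- exact: Tex_not_predictable.
- by exists Tex, e_ex, f_ex; split; [| exact: Tex_potential | exact: Tex_not_predictable].
Qed.
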